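(* In the setting below, suppose there exist $K\ge 0$ and $R>0$ such that $\mathbb{P}_X(S_r)\le K\,\mathbb{P}_X(B_r)$ for all $r\in(0,R)$. If $x$ is a Lebesgue point for $\eta$ with respect to $\mathbb{P}_X$, then $\mathbb{E}[|\eta(X^x_m)-\eta(x)|]\to 0$ as $m\to\infty$, for any choice of nearest neighbors $X^x_m$ (any tie-breaking).
   Context: Let $(\mathcal{X},d)$ be a metric space with its Borel $\sigma$-algebra, let $(\Omega,\mathcal{F},\mathbb{P})$ be a probability space, and let $X,X_1,X_2,\dots$ be i.i.d. $\mathcal{X}$-valued random variables with common law $\mathbb{P}_X$. For $x\in\mathcal{X}$ and $r>0$ write $B_r=\{x':d(x,x')<r\}$, $\bar B_r=\{x':d(x,x')\le r\}$ and $S_r=\{x':d(x,x')=r\}$. The support of $\mathbb{P}_X$ is the set of $x$ such that $\mathbb{P}_X(\bar B_r(x))>0$ for all $r>0$. Fix $x$ in the support of $\mathbb{P}_X$ and a bounded measurable $\eta:\mathcal{X}\to\mathbb{R}$. For each $m\in\mathbb{N}$, a nearest neighbor of $x$ among $X_1,\dots,X_m$ is a measurable $X^x_m:\Omega\to\mathcal{X}$ with $X^x_m(\omega)\in\arg\min_{x'\in\{X_1(\omega),\dots,X_m(\omega)\}}d(x,x')$ for every $\omega\in\Omega$; fix such a sequence $(X^x_m)_{m\in\mathbb{N}}$. The point $x$ is a Lebesgue point if $\mathbb{E}[\mathbb{I}_{\bar B_r}(X)\,|\eta(X)-\eta(x)|]/\mathbb{P}_X(\bar B_r)\to 0$ as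 $r\to 0^+$. *)

From HB Require Import structures.
From mathcomp Require Import all_boot all_order all_algebra.
From mathcomp Require Import all_classical all_reals all_analysis.
Set Implicit Arguments. Unset Strict Implicit. Unset Printing Implicit Defensive.
Import Order.TTheory GRing.Theory Num.Theory.
Local Open Scope classical_set_scope.
Local Open Scope ring_scope.

Definition is_metric (R : realType) (T : Type) (dist : T -> T -> R) : Prop :=
  [/\ forall x y, 0 <= dist x y,
      forall x y, dist x y = 0 <-> x = y,
      forall x y, dist x y = dist y x &
      forall x y z, dist x z <= dist x y + dist y z].

Definition oball (R : realType) (T : Type) (dist : T -> T -> R) (x : T) (r : R) : set T :=
  [set y | dist x y < r].
Definition cball (R : realType) (T : Type) (dist : T -> T -> R) (x : T) (r : R) : set T :=
  [set y | dist x y <= r].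
Definition sphere (R : realType) (T : Type) (dist : T -> T -> R) (x : T) (r : R) : set T :=
  [set y | dist x y = r].

Definition metric_open (R : realType) (T : Type) (dist : T -> T -> R) (A : set T) : Prop :=
  forall x, A x -> exists2 r : R, 0 < r & oball dist x r `<=` A.

Definition borel_of_metric (R : realType) (dT : measure_display) (T : measurableType dT)
  (dist : T -> T -> R) : Prop :=
  (@measurable dT T) = <<s [set A | metric_open dist A] >>.

Definition mutually_independent_rv (R : realType) (dO : measure_display)
  (Omega : measurableType dO) (P : probability Omega R)
  (dT : measure_display) (T : measurableType dT) (Xs : nat -> Omega -> T) : Prop :=
  forall (I : seq nat) (A : nat -> set T), uniq I ->
    (forall i, i \in I -> measurable (A i)) ->
    P (\bigcap_(i in [set` I]) (Xs i @^-1` A i)) =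
    (\prod_(i <- I) P (Xs i @^-1` A i))%E.

Definition identically_distributed (R : realType) (dO : measure_display)
  (Omega : measurableType dO) (P : probability Omega R)
  (dT : measure_display) (T : measurableType dT) (Xs : nat -> Omega -> T) : Prop :=
  forall i (A : set T), measurable A -> P (Xs i @^-1` A) = P (Xs 0%N @^-1` A).

Definition in_support (R : realType) (dO : measure_display)
  (Omega : measurableType dO) (P : probability Omega R)
  (dT : measure_display) (T : measurableType dT) (dist : T -> T -> R)
  (X : Omega -> T) (x : T) : Prop :=
  forall r : R, 0 < r -> (0 < P (X @^-1` cball dist x r))%E.

Definition lebesgue_point (R : realType) (dO : measure_display)
  (Omega : measurableType dO) (P : probability Omega R)
  (dT : measure_display) (T : measurableType dT) (dist : T -> T -> R)
  (X : Omega -> T) (eta : T -> R) (x : T) : Prop :=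
  (fun r : R =>
     fine (\int[P]_w ((\1_(cball dist x r) (X w) * `|eta (X w) - eta x|)%:E))
     / fine (P (X @^-1` cball dist x r)))
    @ 0^'+ --> 0.

Definition is_nearest_neighbor (R : realType) (dO : measure_display)
  (Omega : measurableType dO) (dT : measure_display) (T : measurableType dT)
  (dist : T -> T -> R) (Xs : nat -> Omega -> T) (x : T) (m : nat)
  (NN : Omega -> T) : Prop :=
  measurable_fun setT NN /\
  forall w, (exists2 i, (1 <= i <= m)%N & NN w = Xs i w) /\
            (forall j, (1 <= j <= m)%N -> dist x (NN w) <= dist x (Xs j w)).

From HB Require Import structures.
From mathcomp Require Import all_boot all_order all_algebra.
From mathcomp Require Import all_classical all_reals all_analysis.
From mathcomp Require Import ring lra.
From mathcomp Require Import measurable_realfun.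
Set Implicit Arguments. Unset Strict Implicit. Unset Printing Implicit Defensive.
Import Order.TTheory GRing.Theory Num.Theory.
Local Open Scope classical_set_scope.
Local Open Scope ring_scope.

(* Write p(r) = P(X in B̄_r(x)), G(r) = E[1_{B̄_r(x)}(X) |eta(X) - eta(x)|] and
   let |eta| <= M.
   1. Either X^x_m lies outside B̄_r(x), or it is one of X_1, ..., X_m inside it, so
        |eta(X^x_m) - eta(x)|
          <= 2M 1{X^x_m outside B̄_r} + sum_{i<=m} 1_{B̄_r}(X_i) |eta(X_i) - eta(x)|.
      X^x_m is outside the ball iff every X_i is; by independence and identical
      distribution this gives E|eta(X^x_m) - eta(x)| <= 2M (1 - p(r))^m + m G(r).
   2. For a level 0 < t <= p(d), the radius r = inf {s | t <= p(s)} satisfies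
      P(X in B_r(x)) <= t <= p(r), by continuity of the measure along monotone
      sequences of balls; the sphere condition then gives p(r) <= (1 + K) t.
   3. Take t = c/m with c = 4M/e + 1.  A Bernoulli-type inequality bounds the first
      term by 2M (1 - t)^m <= 2M/(1 + c) <= e/2, and the Lebesgue point property
      G(r) <= eps p(r) bounds the second by m eps (1 + K) c/m <= e/2.
   The file proves two elementary inequalities, measurability of balls, properties
   of ball probabilities of one random variable (including the quantile radius),
   the risk bound of step 1, and the epsilon argument; the theorem follows. *)

Lemma expr_one_sub_bound (R : realFieldType) (t : R) (m : nat) :
  0 <= t <= 1 -> (1 - t) ^+ m * (1 + m%:R * t) <= 1.
Proof.
case/andP => t0 t1; elim: m => [|m IH]; first by rewrite expr0 mul0r addr0 mulr1.
have a0 : 0 <= (1 - t) ^+ m by rewrite exprn_ge0 // subr_ge0.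
have -> : (1 - t) ^+ m.+1 * (1 + m.+1%:R * t) =
    (1 - t) ^+ m * (1 + m%:R * t) - (1 - t) ^+ m * (t * t * (m%:R + 1)).
  by rewrite exprSr -addn1 natrD; ring.
have : 0 <= (1 - t) ^+ m * (t * t * (m%:R + 1)) by rewrite !mulr_ge0 ?addr_ge0.
by lra.
Qed.

Lemma far_term_small (R : realFieldType) (M e t q : R) (m : nat) :
  0 <= M -> 0 < e -> 0 <= t <= q -> q <= 1 -> m%:R * t = 4 * M / e + 1 ->
  2 * M * (1 - q) ^+ m <= e / 2.
Proof.
move=> M0 e0 /andP[t0 tq] q1 mt.
have t1 : t <= 1 by exact: le_trans tq q1.
set a := (1 - t) ^+ m; have a0 : 0 <= a by rewrite exprn_ge0 // subr_ge0.
have qt : (1 - q) ^+ m <= a by apply: lerXn2r; rewrite ?nnegrE; lra.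
have bern := expr_one_sub_bound m (introT andP (conj t0 t1)); rewrite -/a mt in bern.
(* multiplying the Bernoulli bound by e gives 4 M a + 2 e a <= e *)
have : a * (4 * M) + a * e * 2 <= e.
  have -> : a * (4 * M) + a * e * 2 = e * (a * (1 + (4 * M / e + 1))).
    by field; exact: lt0r_neq0 e0.
  by rewrite -[leRHS]mulr1 ler_pM2l.
have : 0 <= a * e by rewrite mulr_ge0 // ltW.
have : M * (1 - q) ^+ m <= M * a by rewrite ler_wpM2l.
by set b := (1 - q) ^+ m; lra.
Qed.

Section metric_balls.
Variables (R : realType) (dT : measure_display) (T : measurableType dT).
Variable (dist : T -> T -> R).
Hypothesis dist_metric : is_metric dist.

Lemma oball_open x r : metric_open dist (oball dist x r).
Proof.
case: dist_metric => _ _ _ tri y; rewrite /oball /= => xy.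
exists (r - dist x y); first by rewrite subr_gt0.
by move=> z; rewrite /oball /= => yz; have := tri x y z; lra.
Qed.

Lemma cballC_open x r : metric_open dist (~` cball dist x r).
Proof.
case: dist_metric => _ _ sym tri y; rewrite /cball /= => /negP; rewrite -ltNge => xy.
exists (dist x y - r); first by rewrite subr_gt0.
move=> z; rewrite /oball /cball /= => yz; apply/negP; rewrite -ltNge.
by have := tri x z y; rewrite (sym z y); lra.
Qed.

Lemma cball_neg x r : r < 0 -> cball dist x r = set0.
Proof.
case: dist_metric => d0 _ _ _ r0; apply/seteqP; split => // y; rewrite /cball /=.
by have := d0 x y; lra.
Qed.

Lemma cball0 x : cball dist x 0 = [set x].
Proof.
case: dist_metric => d0 d0P _ _; apply/seteqP; split => y; rewrite /cball /=.
  by move=> xy; apply/esym/d0P/eqP; rewrite eq_le xy d0.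
by move=> ->; rewrite (d0P x x).2.
Qed.

Lemma cball_oball_sphere x r :
  cball dist x r = oball dist x r `|` sphere dist x r.
Proof.
apply/seteqP; split => y; rewrite /cball /oball /sphere /=.
  by rewrite le_eqVlt => /orP[/eqP->|->]; [right|left].
by case=> [/ltW|->].
Qed.

Lemma sphere_cball_oball x r :
  sphere dist x r = cball dist x r `\` oball dist x r.
Proof.
apply/seteqP; split => y; rewrite /cball /oball /sphere /=.
  by move=> ->; rewrite ltxx.
by case=> yr /negP; rewrite -leNgt => ry; apply/eqP; rewrite eq_le yr ry.
Qed.

Hypothesis dist_borel : borel_of_metric dist.

Lemma oball_measurable x r : measurable (oball dist x r).
Proof. by rewrite dist_borel; apply: sub_gen_smallest; exact: oball_open. Qed.

Lemma cball_measurable x r : measurable (cball dist x r).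
Proof.
rewrite -[cball _ _ _]setCK; apply: measurableC.
by rewrite dist_borel; apply: sub_gen_smallest; exact: cballC_open.
Qed.

Lemma sphere_measurable x r : measurable (sphere dist x r).
Proof.
rewrite sphere_cball_oball.
by apply: measurableD; [exact: cball_measurable | exact: oball_measurable].
Qed.

End metric_balls.

Lemma invS_gt0 (R : numFieldType) (n : nat) : 0 < (n.+1%:R : R)^-1.
Proof. by rewrite invr_gt0 ltr0Sn. Qed.

Section ball_probabilities.
Variables (R : realType) (dO : measure_display) (Omega : measurableType dO).
Variable (P : probability Omega R).
Variables (dT : measure_display) (T : measurableType dT) (dist : T -> T -> R).
Variables (X : Omega -> T) (x : T).
Hypothesis dist_metric : is_metric dist.
Hypothesis dist_borel : borel_of_metric dist.
Hypothesis X_measurable : measurable_fun setT X.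

Local Notation ball_prob r := (P (X @^-1` cball dist x r)).

Lemma preimage_measurable (A : set T) : measurable A -> measurable (X @^-1` A).
Proof. by move=> mA; rewrite -[_ @^-1` _]setTI; exact: X_measurable. Qed.

Lemma prob_fin (A : set Omega) : measurable A -> P A \is a fin_num.
Proof.
move=> mA; rewrite ge0_fin_numE ?measure_ge0 //.
exact: le_lt_trans (probability_le1 _ mA) (ltey _).
Qed.

Lemma ball_prob_fin r : ball_prob r \is a fin_num.
Proof. by apply/prob_fin/preimage_measurable; exact: cball_measurable. Qed.

Lemma ball_prob_le r s : r <= s -> (ball_prob r <= ball_prob s)%E.
Proof.
move=> rs; apply: le_measure; rewrite ?inE;
  try by apply: preimage_measurable; exact: cball_measurable.
by move=> w; rewrite /cball /= => h; exact: le_trans h rs.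
Qed.

Lemma ball_prob_split r : fine (ball_prob r) =
  fine (P (X @^-1` oball dist x r)) + fine (P (X @^-1` sphere dist x r)).
Proof.
have mO : measurable (X @^-1` oball dist x r).
  by apply: preimage_measurable; exact: oball_measurable.
have mS : measurable (X @^-1` sphere dist x r).
  by apply: preimage_measurable; exact: sphere_measurable.
rewrite cball_oball_sphere preimage_setU measureU //; last first.
  apply/seteqP; split => w //; rewrite /oball /sphere /= => -[+ xr].
  by rewrite xr ltxx.
by rewrite fineD //; exact: prob_fin.
Qed.

Lemma ball_prob_right_cont r :
  (fun n => ball_prob (r + n.+1%:R^-1)) @ \oo --> ball_prob r.
Proof.
pose F n := X @^-1` cball dist x (r + n.+1%:R^-1).
have mF n : measurable (F n) by apply: preimage_measurable; exact: cball_measurable.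
have capF : \bigcap_n F n = X @^-1` cball dist x r.
  apply/seteqP; split => w; rewrite /F /cball /=.
    move=> hw; apply/ler_addgt0Pr => e e0.
    near \oo => n; apply: le_trans (hw n I) _; rewrite lerD2l ltW //.
    by near: n; exact: (near_infty_natSinv_lt (PosNum e0)).
  by move=> hw n _; apply: le_trans hw _; rewrite lerDl invr_ge0.
have F_noninc : nonincreasing_seq F.
  apply/nonincreasing_seqP => n; apply/subsetPset => w; rewrite /F /cball /= => h.
  by apply: le_trans h _; rewrite lerD2l lef_pV2 ?posrE ?ltr0Sn ?ler_nat.
have mcapF : measurable (\bigcap_n F n).
  by rewrite capF; apply: preimage_measurable; exact: cball_measurable.
rewrite -capF; apply: nonincreasing_cvg_mu => //.
exact: le_lt_trans (probability_le1 P (mF 0%N)) (ltey _).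
Unshelve. all: by end_near.
Qed.

Lemma ball_prob_left_lim r :
  (fun n => ball_prob (r - n.+1%:R^-1)) @ \oo --> P (X @^-1` oball dist x r).
Proof.
pose F n := X @^-1` cball dist x (r - n.+1%:R^-1).
have mF n : measurable (F n) by apply: preimage_measurable; exact: cball_measurable.
have cupF : \bigcup_n F n = X @^-1` oball dist x r.
  apply/seteqP; split => w; rewrite /F /cball /oball /=.
    move=> [n _]; rewrite /preimage /= => h.
    by have := @invS_gt0 R n; move: h; set i := _^-1; lra.
  rewrite -subr_gt0 => hw.
  have [n hn] := filter_ex (near_infty_natSinv_lt (PosNum hw)).
  by exists n => //=; move: hn; set i := _^-1; rewrite [_%:num]/=; lra.
have F_nondec : nondecreasing_seq F.
  apply/nondecreasing_seqP => n; apply/subsetPset => w; rewrite /F /cball /= => h.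
  by apply: le_trans h _; rewrite lerD2l lerN2 lef_pV2 ?posrE ?ltr0Sn ?ler_nat.
have mcupF : measurable (\bigcup_n F n).
  by rewrite cupF; apply: preimage_measurable; exact: oball_measurable.
by rewrite -cupF; apply: nondecreasing_cvg_mu.
Qed.

(* Quantile radius: below any level 0 < t <= p(d), the radius r = inf {s | t <= p(s)}
   satisfies P(X in the open ball of radius r) <= t <= p(r). *)
Lemma quantile_radius t d : 0 < t -> (t%:E <= ball_prob d)%E ->
  exists r, [/\ 0 <= r, r <= d, (t%:E <= ball_prob r)%E &
                (P (X @^-1` oball dist x r) <= t%:E)%E].
Proof.
move=> t0 td; pose S := [set s | (t%:E <= ball_prob s)%E].
have S_ge0 : lbound S 0.
  move=> s ts; rewrite leNgt; apply/negP => s0; move: ts.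
  by rewrite /S /= (cball_neg dist_metric) // preimage_set0 measure0 lee_fin leNgt t0.
have S_lb : has_lbound S by exists 0.
have S_ne : S !=set0 by exists d.
exists (inf S); split.
- exact: lb_le_inf.
- exact: ge_inf.
- apply: (cvge_to_ge (@ball_prob_right_cont (inf S))); apply: nearW => n /=.
  have [s Ss sr] := inf_adherent (@invS_gt0 R n) (conj S_ne S_lb).
  by apply: le_trans Ss (ball_prob_le _); rewrite ltW.
- apply: (cvge_to_le (@ball_prob_left_lim (inf S))); apply: nearW => n /=.
  rewrite leNgt; apply/negP => /ltW /(ge_inf S_lb).
  by have := @invS_gt0 R n; set i := _^-1; lra.
Qed.

End ball_probabilities.

Lemma bounded_integral_fin (R : realType) (dO : measure_display)
    (Omega : measurableType dO) (P : probability Omega R) (f : Omega -> R) (c : R) :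
  measurable_fun setT f -> (forall w, 0 <= f w <= c) ->
  (\int[P]_w (f w)%:E)%E \is a fin_num.
Proof.
move=> mf fc; have c0 : 0 <= c by have /andP[f0 fc0] := fc point; exact: le_trans fc0.
rewrite ge0_fin_numE; last by apply: integral_ge0 => w _; rewrite lee_fin; case/andP: (fc w).
apply: le_lt_trans (ltey c%:E); apply: (@le_trans _ _ (\int[P]_w (cst c%:E) w)%E).
  apply: ge0_le_integral => //; last by move=> w _; rewrite lee_fin; case/andP: (fc w).
  - by move=> w _; rewrite lee_fin; case/andP: (fc w).
  - exact/measurable_EFinP.
rewrite integral_cst // -[leRHS]mule1.
by apply: lee_wpmul2l; [rewrite lee_fin | exact: probability_le1].
Qed.

Section nearest_neighbour_risk.
Variables (R : realType) (dO : measure_display) (Omega : measurableType dO).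
Variable (P : probability Omega R).
Variables (dT : measure_display) (T : measurableType dT) (dist : T -> T -> R).
Variables (Xs : nat -> Omega -> T) (eta : T -> R) (x : T) (NN : nat -> Omega -> T).
Variable (M : R).
Hypothesis dist_metric : is_metric dist.
Hypothesis dist_borel : borel_of_metric dist.
Hypothesis Xs_measurable : forall i, measurable_fun setT (Xs i).
Hypothesis Xs_indep : mutually_independent_rv P Xs.
Hypothesis Xs_ident : identically_distributed P Xs.
Hypothesis eta_measurable : measurable_fun setT eta.
Hypothesis eta_bounded : forall y, `|eta y| <= M.
Hypothesis NN_nearest : forall m, (1 <= m)%N -> is_nearest_neighbor dist Xs x m (NN m).

Local Notation excess := (fun y => `|eta y - eta x|).
Local Notation local_excess r := (fun y => \1_(cball dist x r) y * `|eta y - eta x|).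
Local Notation local_risk r := (\int[P]_w (local_excess r (Xs 0%N w))%:E)%E.
Local Notation risk m := (\int[P]_w (`|eta (NN m w) - eta x|)%:E)%E.
Local Notation ball_prob r := (P (Xs 0%N @^-1` cball dist x r)).

Let ball_prob_real r : ball_prob r \is a fin_num :=
  ball_prob_fin P x dist_metric dist_borel (Xs_measurable 0) r.

Lemma ball_prob_le1 r : fine (ball_prob r) <= 1.
Proof.
rewrite -lee_fin fineK ?ball_prob_real //; apply: probability_le1.
by apply: preimage_measurable => //; exact: cball_measurable.
Qed.


Lemma M_ge0 : 0 <= M.
Proof. exact: le_trans (normr_ge0 _) (eta_bounded x). Qed.

Lemma excess_measurable : measurable_fun setT excess.
Proof.
apply: measurableT_comp; first exact: normr_measurable.
by apply: measurable_funB => //; exact: measurable_cst.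
Qed.

Lemma local_excess_measurable r : measurable_fun setT (local_excess r).
Proof.
apply: measurable_funM; last exact: excess_measurable.
by apply: measurable_indic; exact: cball_measurable.
Qed.

Lemma excess_bound y : 0 <= excess y <= 2 * M.
Proof.
rewrite normr_ge0 /=; have := ler_normB (eta y) (eta x).
by have := eta_bounded y; have := eta_bounded x; lra.
Qed.

Lemma local_excess_bound r y : 0 <= local_excess r y <= 2 * M.
Proof.
have /andP[e0 eM] := excess_bound y; rewrite /= indicE.
by case: (y \in _); rewrite ?mul1r ?mul0r ?e0 ?eM // lexx mulr_ge0 ?M_ge0.
Qed.

Lemma local_excess0 y : local_excess 0 y = 0.
Proof.
rewrite /= (cball0 dist_metric) indicE.
by case: (boolP (y \in _)) => [/set_mem -> | _]; rewrite ?subrr ?normr0 ?mulr0 ?mul0r.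
Qed.

Lemma local_risk0 : local_risk 0 = 0%E.
Proof. by under eq_integral => w _ do rewrite local_excess0; exact: integral0. Qed.

Lemma local_risk_fin r : local_risk r \is a fin_num.
Proof.
apply: bounded_integral_fin; last by move=> w; exact: local_excess_bound.
exact: measurableT_comp (local_excess_measurable r) (Xs_measurable 0).
Qed.

Lemma risk_fin m : (1 <= m)%N -> risk m \is a fin_num.
Proof.
move=> m1; have [NN_meas _] := NN_nearest m1.
apply: bounded_integral_fin; last by move=> w; exact: excess_bound.
exact: measurableT_comp excess_measurable NN_meas.
Qed.

Lemma local_risk_law r i :
  (\int[P]_w (local_excess r (Xs i w))%:E)%E = local_risk r.
Proof.
have law j : (\int[P]_w (local_excess r (Xs j w))%:E =
    \int[pushforward P (Xs j)]_y (local_excess r y)%:E)%E.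
  rewrite (ge0_integral_pushforward (Xs_measurable j)) //= ?preimage_setT //.
    by apply/measurable_EFinP; exact: local_excess_measurable.
rewrite !law; apply: eq_measure_integral => A mA _.
by rewrite /pushforward; exact: Xs_ident.
Qed.

(* Pointwise domination: either the nearest neighbour lies outside the ball, or it
   is one of X_1, ..., X_m lying inside the ball. *)
Lemma nn_excess_le m r w : (1 <= m)%N ->
  excess (NN m w) <= 2 * M * \1_(NN m @^-1` (~` cball dist x r)) w
                     + \sum_(i <- iota 1 m) local_excess r (Xs i w).
Proof.
move=> m1; have [_ /(_ w) [[i im NNi] _]] := NN_nearest m1.
have sum_ge0 : 0 <= \sum_(j <- iota 1 m) local_excess r (Xs j w).
  by apply: sumr_ge0 => j _; case/andP: (local_excess_bound r (Xs j w)).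
rewrite indicE; case: (boolP (w \in _)) => [_ | /negP out].
  by rewrite mulr1; have /andP[_] := excess_bound (NN m w); lra.
have NN_in : cball dist x r (NN m w) by apply: contrapT => ?; apply: out; exact: mem_set.
have i_in : i \in iota 1 m by rewrite mem_iota add1n ltnS.
rewrite mulr0 add0r (bigD1_seq i) ?iota_uniq //= -NNi indicE mem_set // mul1r.
rewrite lerDl; apply: sumr_ge0 => j _.
by case/andP: (local_excess_bound r (Xs j w)).
Qed.

(* The nearest neighbour is outside the ball iff all of X_1, ..., X_m are; by
   independence this has probability (1 - p(r))^m. *)
Lemma nn_outside_prob m r : (1 <= m)%N ->
  P (NN m @^-1` (~` cball dist x r)) = ((1 - fine (ball_prob r)) ^+ m)%:E.
Proof.
move=> m1; have [_ NN_min] := NN_nearest m1.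
have -> : NN m @^-1` (~` cball dist x r) =
    \bigcap_(i in [set` iota 1 m]) (Xs i @^-1` (~` cball dist x r)).
  apply/seteqP; split => w /=.
    move=> out i /=; rewrite mem_iota add1n ltnS => im xi; apply: out.
    by have [_ le] := NN_min w; exact: le_trans (le i im) xi.
  have [[i im ->] _] := NN_min w; apply.
  by rewrite /= mem_iota add1n ltnS.
have mC : measurable (~` cball dist x r) by apply: measurableC; exact: cball_measurable.
rewrite Xs_indep ?iota_uniq //.
under eq_bigr => i _ do rewrite (Xs_ident i mC).
rewrite -preimage_setC probability_setC; last first.
  by apply: preimage_measurable => //; exact: cball_measurable.
rewrite -(fineK (ball_prob_real r)).
rewrite -EFinB prodEFin (_ : iota 1 m = index_iota 1 m.+1); last first.
  by rewrite /index_iota subn1.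
by rewrite prodr_const_nat subn1.
Qed.

Lemma local_sum_integral m r :
  (\int[P]_w (\sum_(i <- iota 1 m) (local_excess r (Xs i w))%:E))%E =
  (m%:R%:E * local_risk r)%E.
Proof.
have mX i : measurable_fun setT (fun w => (local_excess r (Xs i w))%:E).
  apply/measurable_EFinP; exact: measurableT_comp (local_excess_measurable r) _.
rewrite ge0_integral_sum //.
under eq_bigr => i _ do rewrite local_risk_law.
rewrite -(fineK (local_risk_fin r)) sumEFin (_ : iota 1 m = index_iota 1 m.+1); last first.
  by rewrite /index_iota subn1.
by rewrite sumr_const_nat subn1 -EFinM mulr_natl.
Qed.

Lemma risk_bound_ereal m r : (1 <= m)%N ->
  (risk m <= (2 * M)%:E * P (NN m @^-1` (~` cball dist x r))
             + m%:R%:E * local_risk r)%E.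
Proof.
move=> m1; have [NN_meas _] := NN_nearest m1.
set A := NN m @^-1` (~` cball dist x r).
have mA : measurable A.
  rewrite /A -[_ @^-1` _]setTI; apply: NN_meas => //.
  by apply: measurableC; exact: cball_measurable.
have mI : measurable_fun setT (fun w => (2 * M * \1_A w)%:E).
  apply/measurable_EFinP; apply: measurable_funM; first exact: measurable_cst.
  exact: measurable_indic.
have I_ge0 w : setT w -> (0 <= (2 * M * \1_A w)%:E)%E.
  by rewrite lee_fin indicE mulr_ge0 ?mulr_ge0 ?M_ge0.
have mS : measurable_fun setT
    (fun w => \sum_(i <- iota 1 m) (local_excess r (Xs i w))%:E)%E.
  apply: emeasurable_sum => i; apply/measurable_EFinP.
  exact: measurableT_comp (local_excess_measurable r) _.
have S_ge0 w : setT w -> (0 <= \sum_(i <- iota 1 m) (local_excess r (Xs i w))%:E)%E.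
  move=> _; apply: sume_ge0 => i _.
  by rewrite lee_fin; case/andP: (local_excess_bound r (Xs i w)).
apply: (@le_trans _ _ (\int[P]_w ((2 * M * \1_A w)%:E
                        + \sum_(i <- iota 1 m) (local_excess r (Xs i w))%:E))%E).
  apply: ge0_le_integral => //.
  - by apply/measurable_EFinP; exact: measurableT_comp excess_measurable NN_meas.
  - exact: emeasurable_funD.
  - by move=> w _; rewrite sumEFin -EFinD lee_fin; exact: nn_excess_le.
rewrite ge0_integralD // local_sum_integral.
under eq_integral => w _ do rewrite EFinM.
rewrite ge0_integralZl_EFin ?integral_indic ?setIT ?mulr_ge0 ?M_ge0 //.
by apply/measurable_EFinP; exact: measurable_indic.
Qed.

Lemma risk_bound m r : (1 <= m)%N ->
  fine (risk m) <= 2 * M * (1 - fine (ball_prob r)) ^+ m + m%:R * fine (local_risk r).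
Proof.
move=> m1; rewrite -lee_fin EFinD !EFinM fineK ?risk_fin // fineK ?local_risk_fin //.
by rewrite -nn_outside_prob // -EFinM; exact: risk_bound_ereal.
Qed.

Variables (K Rr : R).
Hypothesis X_support : in_support P dist (Xs 0%N) x.
Hypothesis K_ge0 : 0 <= K.
Hypothesis Rr_gt0 : 0 < Rr.
Hypothesis sphere_bound : forall r, 0 < r < Rr ->
  (P (Xs 0%N @^-1` sphere dist x r) <= K%:E * P (Xs 0%N @^-1` oball dist x r))%E.
Hypothesis x_lebesgue : lebesgue_point P dist (Xs 0%N) eta x.

Lemma ball_prob_gt0 r : 0 < r -> 0 < fine (ball_prob r).
Proof. by move=> r0; have := X_support r0; rewrite -(fineK (ball_prob_real r)) lte_fin. Qed.

Lemma local_risk_small eps : 0 < eps ->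
  exists2 d, 0 < d & forall r, 0 < r < d ->
    fine (local_risk r) <= eps * fine (ball_prob r).
Proof.
move=> eps0; move/cvgrPdist_le : x_lebesgue => /(_ eps eps0) [d /= d0 near_d].
exists d => // r /andP[r0 rd].
have ratio : `|0 - fine (local_risk r) / fine (ball_prob r)| <= eps.
  by apply: near_d => //; rewrite /ball_ /= sub0r normrN gtr0_norm.
have G_ge0 : 0 <= fine (local_risk r).
  apply/fine_ge0/integral_ge0 => w _.
  by rewrite lee_fin; case/andP: (local_excess_bound r (Xs 0 w)).
have p_gt0 := ball_prob_gt0 r0.
move: ratio; rewrite sub0r normrN ger0_norm; last by rewrite divr_ge0 // ltW.
by rewrite ler_pdivrMr.
Qed.

(* At a radius r < min(d, Rr) where the open ball has probability at most t, the
   closed ball has probability at most (1 + K) t, so G(r) <= eps (1 + K) t. *)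
Lemma local_term_small eps d t r :
  0 < eps -> (forall s, 0 < s < d -> fine (local_risk s) <= eps * fine (ball_prob s)) ->
  0 <= r -> r < d -> r < Rr -> (P (Xs 0%N @^-1` oball dist x r) <= t%:E)%E ->
  fine (local_risk r) <= eps * ((1 + K) * t).
Proof.
move=> eps0 small r0 rd rR ot.
have t0 : 0 <= t by rewrite -lee_fin; apply: le_trans ot; exact: measure_ge0.
have [->|rn0] := eqVneq r 0.
  by rewrite local_risk0 /=; apply: mulr_ge0; [exact: ltW | rewrite mulr_ge0 ?addr_ge0].
have r_gt0 : 0 < r by rewrite lt_neqAle eq_sym rn0 r0.
apply: le_trans (small r _) _; first by rewrite r_gt0.
apply: ler_wpM2l; first exact: ltW.
have oball_fin : P (Xs 0%N @^-1` oball dist x r) \is a fin_num.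
  by apply: prob_fin; apply: preimage_measurable => //; exact: oball_measurable.
have sphere_fin : P (Xs 0%N @^-1` sphere dist x r) \is a fin_num.
  by apply: prob_fin; apply: preimage_measurable => //; exact: sphere_measurable.
have so : fine (P (Xs 0%N @^-1` sphere dist x r)) <=
    K * fine (P (Xs 0%N @^-1` oball dist x r)).
  by rewrite -lee_fin EFinM !fineK //; apply: sphere_bound; rewrite r_gt0.
have {}ot : fine (P (Xs 0%N @^-1` oball dist x r)) <= t by rewrite -lee_fin fineK.
rewrite (ball_prob_split P x dist_metric dist_borel (Xs_measurable 0)).
have : K * fine (P (Xs 0%N @^-1` oball dist x r)) <= K * t by rewrite ler_wpM2l.
by lra.
Qed.

(* The epsilon argument: choose c = 4M/e + 1, the level t = c/m and the quantile
   radius r for t; both terms of the risk bound are then at most e/2. *)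
Lemma risk_eventually_small e : 0 < e -> \forall m \near \oo, fine (risk m) <= e.
Proof.
move=> e0; pose c := 4 * M / e + 1.
have c_gt0 : 0 < c by rewrite ltr_pwDr ?divr_ge0 ?mulr_ge0 ?M_ge0 // ltW.
pose eps := e / (2 * ((1 + K) * c)).
have eps_gt0 : 0 < eps by rewrite divr_gt0 // !mulr_gt0 // ltr_pwDl.
have [d d0 small] := local_risk_small eps_gt0.
pose del := Num.min d Rr / 2.
have min_gt0 : 0 < Num.min d Rr by rewrite lt_min d0 Rr_gt0.
have del_gt0 : 0 < del by rewrite divr_gt0.
have /andP[del_d del_Rr] : (del < d) && (del < Rr).
  by rewrite -lt_min /del ltr_pdivrMr // ltr_pMr // ltr1n.
near=> m.
have m1 : (1 <= m)%N by near: m; exact: nbhs_infty_ge.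
have m_big : c / fine (ball_prob del) < m%:R by near: m; exact: nbhs_infty_gtr.
have m_gt0 : 0 < m%:R :> R by rewrite ltr0n.
pose t := c / m%:R.
have mt : m%:R * t = c by rewrite /t mulrC divfK ?lt0r_neq0.
have t_gt0 : 0 < t by rewrite divr_gt0.
have t_del : (t%:E <= ball_prob del)%E.
  rewrite -(fineK (ball_prob_real del)) lee_fin ler_pdivrMr // mulrC -ler_pdivrMr.
    exact: ltW.
  exact: ball_prob_gt0.
have [r [r0 r_del tr ro]] :=
  quantile_radius dist_metric dist_borel (Xs_measurable 0) t_gt0 t_del.
apply: le_trans (@risk_bound m r m1) _; rewrite [leRHS]splitr; apply: lerD.
  apply: far_term_small M_ge0 e0 _ (ball_prob_le1 r) mt.
  by rewrite ltW //= -lee_fin fineK ?ball_prob_real.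
have := local_term_small eps_gt0 small r0
  (le_lt_trans r_del del_d) (le_lt_trans r_del del_Rr) ro.
move/(ler_wpM2l (ler0n R m)) => /le_trans; apply.
have -> : m%:R * (eps * ((1 + K) * t)) = eps * ((1 + K) * c) by rewrite -mt; ring.
suff -> : eps * ((1 + K) * c) = e / 2 by [].
by rewrite /eps; field; rewrite !lt0r_neq0 // ltr_pwDl.
Unshelve. all: by end_near.
Qed.

End nearest_neighbour_risk.

Unset Implicit Arguments.

Theorem mainTheorem8 (R : realType)
  (dO : measure_display) (Omega : measurableType dO) (P : probability Omega R)
  (dT : measure_display) (T : measurableType dT) (dist : T -> T -> R)
  (Xs : nat -> Omega -> T) (eta : T -> R) (x : T)
  (NN : nat -> Omega -> T) :
  is_metric dist ->
  borel_of_metric dist ->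
  (forall i, measurable_fun setT (Xs i)) ->
  mutually_independent_rv P Xs ->
  identically_distributed P Xs ->
  in_support P dist (Xs 0%N) x ->
  measurable_fun setT eta ->
  (exists M : R, forall y, `|eta y| <= M) ->
  (forall m, (1 <= m)%N -> is_nearest_neighbor dist Xs x m (NN m)) ->
  (exists K : R, exists2 Rr : R, 0 <= K /\ 0 < Rr &
     forall r, 0 < r < Rr ->
       (P (Xs 0%N @^-1` sphere dist x r) <= K%:E * P (Xs 0%N @^-1` oball dist x r))%E) ->
  lebesgue_point P dist (Xs 0%N) eta x ->
  ((fun m => \int[P]_w (`|eta (NN m w) - eta x|)%:E) @ \oo --> 0)%E.
Proof.
move=> metric borel Xs_meas indep ident supp eta_meas [M eta_bd] nearest.
move=> [K [Rr [K_ge0 Rr_gt0] sphere_bd]] leb.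
apply: cvg_EFin.
  near=> m; apply: (risk_fin P eta_meas eta_bd nearest).
  by near: m; exact: nbhs_infty_ge.
apply/cvgrPdist_le => e e0; near=> m.
rewrite sub0r normrN ger0_norm; last by apply/fine_ge0/integral_ge0.
near: m; exact: (risk_eventually_small metric borel Xs_meas indep ident eta_meas eta_bd
  nearest supp K_ge0 Rr_gt0 sphere_bd leb e0).
Unshelve. all: by end_near.
Qed.
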